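(* Let $\gamma=(\gamma_1,\gamma_2)\ge(0,0)$ and $\varkappa\ge0$ with $\gamma_2\ge\varkappa$. If $A\in\mathcal M_{\gamma,0}$ and $B\in\mathcal M_{\gamma,\varkappa}$, then the matrix products $AB$ and $BA$ (defined by $(AB)_a^b=\sum_{c\in\mathcal L}A_a^cB_c^b$) exist (the defining series converge absolutely), belong to $\mathcal M_{\gamma,\varkappa}$, and $$|AB|_{\gamma,\varkappa}\le|A|_{\gamma,0}|B|_{\gamma,\varkappa},\qquad |BA|_{\gamma,\varkappa}\le|A|_{\gamma,0}|B|_{\gamma,\varkappa}.$$
   Context: Let $d_*\ge1$ and let $\mathcal L\subset\mathbb Z^{d_*}$. For $a\in\mathbb Z^{d_*}$, $\langle a\rangle=\max(|a|,1)$, and $[a-b]=\min(|a-b|,|a+b|)$. For $\gamma=(\gamma_1,\gamma_2)$ and $\varkappa\ge0$ let $e_{\gamma,\varkappa}(a,b)=C\,e^{\gamma_1[a-b]}\max([a-b],1)^{\gamma_2}\min(\langle a\rangle,\langle b\rangle)^{\varkappa}$, where $C\ge1$ is a fixed constant, taken sufficiently large depending only on $\gamma_2$ and $\varkappa$ (standing assumption). For a matrix $A=(A_a^b)_{a,b\in\mathcal L}$ whose entries $A_a^b$ are complex $2\times2$ matrices, let $$|A|_{\gamma,\varkappa}=\max\Big\{\sup_a\sum_b\|A_a^b\|\,e_{\gamma,\varkappa}(a,b),\ \sup_b\sum_a\|A_a^b\|\,e_{\gamma,\varkappa}(a,b)\Big\},$$ $\|\cdot\|$ being the operator norm of $2\times2$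 matrices, and let $\mathcal M_{\gamma,\varkappa}$ be the space of such matrices with $|A|_{\gamma,\varkappa}<\infty$. *)

From HB Require Import structures.
From mathcomp Require Import all_boot all_order all_algebra.
From mathcomp Require Import all_classical all_reals all_analysis.
From mathcomp Require Import complex.
Set Implicit Arguments. Unset Strict Implicit. Unset Printing Implicit Defensive.
Import Order.TTheory GRing.Theory Num.Theory.
Local Open Scope classical_set_scope.
Local Open Scope ring_scope.

Section Defs.
Variable R : realType.
Variable d : nat.

Definition Zd := 'rV[int]_d.

Definition zabs (a : Zd) : R := Num.sqrt (\sum_(i < d) ((a ord0 i)%:~R : R) ^+ 2).

Definition zang (a : Zd) : R := Num.max (zabs a) 1.

Definition zbr (a b : Zd) : R := Num.min (zabs (a - b)) (zabs (a + b)).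

Definition ewt (C g1 g2 kap : R) (a b : Zd) : R :=
  C * expR (g1 * zbr a b) * (Num.max (zbr a b) 1) `^ g2
    * (Num.min (zang a) (zang b)) `^ kap.

Definition cvnorm (v : 'cV[R[i]]_2) : R :=
  Num.sqrt (\sum_(i < 2) (complex.Re (v i ord0) ^+ 2 + complex.Im (v i ord0) ^+ 2)).

Definition opnorm (M : 'M[R[i]]_2) : R :=
  sup [set cvnorm (M *m v) | v in [set v : 'cV[R[i]]_2 | cvnorm v <= 1]].

(* a matrix indexed by L x L with 2x2 complex blocks; only entries in L matter *)
Definition blockmx := Zd -> Zd -> 'M[R[i]]_2.

Definition mnorm (C g1 g2 kap : R) (L : set Zd) (A : blockmx) : \bar R :=
  Order.max (Order.max 0%E
    (ereal_sup [set (\esum_(b in L) (opnorm (A a b) * ewt C g1 g2 kap a b)%:E)%E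
               | a in L]))
    (ereal_sup [set (\esum_(a in L) (opnorm (A a b) * ewt C g1 g2 kap a b)%:E)%E
               | b in L]).

Definition abs_summable (L : set Zd) (F : Zd -> 'M[R[i]]_2) : Prop :=
  (\esum_(c in L) (opnorm (F c))%:E < +oo)%E.

Definition rsum (L : set Zd) (f : Zd -> R) : R :=
  fine (\esum_(c in L) ((Num.max (f c) 0)%:E))%E
  - fine (\esum_(c in L) ((Num.max (- f c) 0)%:E))%E.

Definition msum (L : set Zd) (F : Zd -> 'M[R[i]]_2) : 'M[R[i]]_2 :=
  \matrix_(i, j) ((rsum L (fun c => complex.Re (F c i j)))
                   +i* (rsum L (fun c => complex.Im (F c i j))))%C.

Definition mprod (L : set Zd) (A B : blockmx) : blockmx :=
  fun a b => msum L (fun c => A a c *m B c b).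

End Defs.

(* The weight is submultiplicative up to a constant factor: since
   [a - b] <= [a - c] + [c - b], <a> <= 2 <c> max([a - c], 1) and kappa <= gamma_2,
     K * e_{gamma,kappa}(a, b) <= e_{gamma,0}(a, c) * e_{gamma,kappa}(c, b)
   as soon as C >= K * 2^(gamma_2 + kappa).  Hence the weighted kernel of AB is
   dominated entrywise by the product of the weighted kernels of A and B, and
   Schur's test bounds row and column sums of such a product by the product of
   the row and column bounds of the factors.  Operator norms of 2x2 blocks are
   compared with entrywise l^1 norms; this costs the fixed factor K = 1024,
   which the choice of C absorbs. *)

From Pilot Require Import Defs.
From HB Require Import structures.
From mathcomp Require Import all_boot all_order all_algebra.
From mathcomp Require Import all_classical all_reals all_analysis.
From mathcomp Require Import complex.
From mathcomp Require Import ring lra.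
Import Order.TTheory GRing.Theory Num.Theory.
Local Open Scope classical_set_scope.
Local Open Scope ring_scope.
Set Implicit Arguments. Unset Strict Implicit. Unset Printing Implicit Defensive.

Section ComplexTaxicab.
Variable R : realFieldType.

Definition cabs1 (z : R[i]) : R := `|complex.Re z| + `|complex.Im z|.

Lemma cabs1_ge0 z : 0 <= cabs1 z.
Proof. by rewrite addr_ge0. Qed.

Lemma cabs1D x y : cabs1 (x + y) <= cabs1 x + cabs1 y.
Proof.
case: x => a b; case: y => c e; rewrite /cabs1 /=.
have := ler_normD a c; have := ler_normD b e; lra.
Qed.

Lemma cabs1M x y : cabs1 (x * y) <= cabs1 x * cabs1 y.
Proof.
case: x => a b; case: y => c e; rewrite /cabs1 /=.
have := ler_normB (a * c) (b * e); have := ler_normD (a * e) (b * c).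
rewrite !normrM.
have := normr_ge0 a; have := normr_ge0 b; have := normr_ge0 c; have := normr_ge0 e.
nra.
Qed.

Lemma cabs1_sum (I : finType) (F : I -> R[i]) :
  cabs1 (\sum_i F i) <= \sum_i cabs1 (F i).
Proof.
elim/big_ind2: _ => [|x1 x2 y1 y2 h1 h2|//]; first by rewrite /cabs1 normr0 addr0.
exact: le_trans (cabs1D _ _) (lerD h1 h2).
Qed.

End ComplexTaxicab.

Lemma sum_ord2 (V : nmodType) (F : 'I_2 -> V) : \sum_i F i = F 0 + F 1.
Proof.
rewrite !big_ord_recl big_ord0 addr0.
by have -> : lift ord0 ord0 = 1 :> 'I_2 by apply: val_inj.
Qed.

Lemma ord2P (i : 'I_2) : i = 0 \/ i = 1.
Proof. by case: i => -[|[|]] //= ?; [left|right]; apply: val_inj. Qed.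

Section MatrixNorms.
Variable R : realType.
Implicit Types (v : 'cV[R[i]]_2) (M N : 'M[R[i]]_2).

Definition mxabs1 M : R := \sum_i \sum_j cabs1 (M i j).

Lemma mxabs1_ge0 M : 0 <= mxabs1 M.
Proof. by rewrite !sumr_ge0 // => i _; rewrite sumr_ge0 // => j _; apply: cabs1_ge0. Qed.

Lemma cabs1_le_mxabs1 M i j : cabs1 (M i j) <= mxabs1 M.
Proof.
rewrite /mxabs1 !sum_ord2.
have := cabs1_ge0 (M 0 0); have := cabs1_ge0 (M 0 1).
have := cabs1_ge0 (M 1 0); have := cabs1_ge0 (M 1 1).
by have [->|->] := ord2P i; have [->|->] := ord2P j; lra.
Qed.

Lemma mxabs1M M N : mxabs1 (M *m N) <= mxabs1 M * mxabs1 N.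
Proof.
rewrite /mxabs1 !sum_ord2 !mxE !sum_ord2.
have h (a b c e : R[i]) : cabs1 (a * b + c * e) <= cabs1 a * cabs1 b + cabs1 c * cabs1 e.
  exact: le_trans (cabs1D _ _) (lerD (cabs1M _ _) (cabs1M _ _)).
have := h (M 0 0) (N 0 0) (M 0 1) (N 1 0); have := h (M 0 0) (N 0 1) (M 0 1) (N 1 1).
have := h (M 1 0) (N 0 0) (M 1 1) (N 1 0); have := h (M 1 0) (N 0 1) (M 1 1) (N 1 1).
have := cabs1_ge0 (M 0 0); have := cabs1_ge0 (M 0 1).
have := cabs1_ge0 (M 1 0); have := cabs1_ge0 (M 1 1).
have := cabs1_ge0 (N 0 0); have := cabs1_ge0 (N 0 1).
have := cabs1_ge0 (N 1 0); have := cabs1_ge0 (N 1 1).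
nra.
Qed.

Lemma cvnormE v : cvnorm v =
  Num.sqrt (complex.Re (v 0 0) ^+ 2 + complex.Im (v 0 0) ^+ 2
          + (complex.Re (v 1 0) ^+ 2 + complex.Im (v 1 0) ^+ 2)).
Proof. by rewrite /cvnorm sum_ord2. Qed.

Lemma cvnorm0 : cvnorm (0 : 'cV[R[i]]_2) = 0.
Proof. by rewrite cvnormE !mxE /= expr0n /= !addr0 sqrtr0. Qed.

Lemma cvnorm_le_cabs1 v : cvnorm v <= cabs1 (v 0 0) + cabs1 (v 1 0).
Proof.
rewrite cvnormE /cabs1.
set x0 := complex.Re _; set y0 := complex.Im _.
set x1 := complex.Re _; set y1 := complex.Im _.
rewrite -[leRHS]ger0_norm ?addr_ge0 // -sqrtr_sqr; apply: ler_wsqrtr.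
rewrite -[x0 ^+ 2]real_normK ?num_real // -[y0 ^+ 2]real_normK ?num_real //.
rewrite -[x1 ^+ 2]real_normK ?num_real // -[y1 ^+ 2]real_normK ?num_real //.
have := normr_ge0 x0; have := normr_ge0 y0; have := normr_ge0 x1; have := normr_ge0 y1.
nra.
Qed.

Lemma cabs1_le_cvnorm v i : cabs1 (v i 0) <= 2 * cvnorm v.
Proof.
rewrite cvnormE mulr_natl mulr2n /cabs1.
set x0 := complex.Re (v 0 0); set y0 := complex.Im (v 0 0).
set x1 := complex.Re (v 1 0); set y1 := complex.Im (v 1 0).
set S := _ + _ + _.
have le_sqrt t : t ^+ 2 <= S -> `|t| <= Num.sqrt S.
  by move=> h; rewrite -sqrtr_sqr ler_wsqrtr.
have := sqr_ge0 x0; have := sqr_ge0 y0; have := sqr_ge0 x1; have := sqr_ge0 y1 => *.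
by have [->|->] := ord2P i; rewrite -/x0 -/y0 -/x1 -/y1; apply: lerD; apply: le_sqrt; rewrite /S; lra.
Qed.

Lemma cvnorm_mulmx_le M v : cvnorm (M *m v) <= 2 * mxabs1 M * cvnorm v.
Proof.
apply: le_trans (cvnorm_le_cabs1 _) _.
rewrite -(sum_ord2 (fun i => cabs1 ((M *m v) i 0))) mulrAC mulrC /mxabs1 mulr_suml.
apply: ler_sum => i _; rewrite mxE mulr_suml.
apply: le_trans (cabs1_sum (fun j => M i j * v j 0)) _; apply: ler_sum => j _.
apply: le_trans (cabs1M _ _) _.
by apply: ler_wpM2l; [exact: cabs1_ge0 | exact: cabs1_le_cvnorm].
Qed.

Let opnorm_set M := [set cvnorm (M *m v) | v in [set v | cvnorm v <= 1]].

Let opnorm_set_ub M : ubound (opnorm_set M) (2 * mxabs1 M).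
Proof.
move=> _ [v /= hv <-]; apply: le_trans (cvnorm_mulmx_le _ _) _.
by rewrite -[leRHS]mulr1 ler_wpM2l // mulr_ge0 // mxabs1_ge0.
Qed.

Lemma opnorm_le_mxabs1 M : opnorm M <= 2 * mxabs1 M.
Proof.
apply: ge_sup; last exact: opnorm_set_ub.
by exists (cvnorm (M *m 0)); exists 0 => //=; rewrite cvnorm0.
Qed.

Lemma cvnorm_mulmx_le_opnorm M v : cvnorm v <= 1 -> cvnorm (M *m v) <= opnorm M.
Proof.
move=> hv; apply: (ub_le_sup (E := opnorm_set M)); last by exists v.
by exists (2 * mxabs1 M); apply: opnorm_set_ub.
Qed.

Lemma opnorm_ge0 M : 0 <= opnorm M.
Proof.
apply: le_trans (cvnorm_mulmx_le_opnorm M (v := 0) _); first exact: sqrtr_ge0.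
by rewrite cvnorm0.
Qed.

Lemma mxabs1_le_opnorm M : mxabs1 M <= 8 * opnorm M.
Proof.
pose e j : 'cV[R[i]]_2 := \col_k (if k == j then 1 else 0).
have cabs1_entry i j : cabs1 (M i j) <= 2 * opnorm M.
  have -> : M i j = (M *m e j) i 0.
    by rewrite mxE sum_ord2 !mxE; have [->|->] := ord2P j; rewrite /= ?mulr1 ?mulr0 ?addr0 ?add0r.
  apply: le_trans (cabs1_le_cvnorm _ _) _; rewrite ler_wpM2l //.
  apply: cvnorm_mulmx_le_opnorm; rewrite cvnormE !mxE.
  by have [->|->] := ord2P j; rewrite /= expr0n /= expr1n !addr0 ?add0r sqrtr1.
rewrite /mxabs1 !sum_ord2.
have := cabs1_entry 0 0; have := cabs1_entry 0 1.
have := cabs1_entry 1 0; have := cabs1_entry 1 1; lra.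
Qed.

Lemma mxabs1_mulmx_le M N : mxabs1 (M *m N) <= 64 * (opnorm M * opnorm N).
Proof.
apply: le_trans (mxabs1M M N) _.
have -> : 64 = 8 * 8 :> R by rewrite -natrM.
rewrite mulrACA.
exact: ler_pM (mxabs1_ge0 M) (mxabs1_ge0 N) (mxabs1_le_opnorm M) (mxabs1_le_opnorm N).
Qed.

Lemma opnorm_mulmx_le M N : opnorm (M *m N) <= 128 * (opnorm M * opnorm N).
Proof.
apply: le_trans (opnorm_le_mxabs1 _) _.
have -> : 128 = 2 * 64 :> R by rewrite -natrM.
by rewrite -mulrA ler_wpM2l ?mxabs1_mulmx_le.
Qed.

End MatrixNorms.

Section ExtendedSums.
Variables (R : realType) (T : choiceType).
Local Open Scope ereal_scope.

Lemma esumZl (S : set T) (a : T -> \bar R) (k : R) : (0 <= k)%R ->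
  (forall i, 0 <= a i) -> \esum_(i in S) k%:E * a i = k%:E * \esum_(i in S) a i.
Proof.
move=> k0 a0; rewrite /esum -ereal_supZl //; last first.
  apply/set0P; exists (\sum_(i \in set0) a i); exists set0 => //.
  exact: fsets_set0.
congr ereal_sup; apply/seteqP; split=> x /=.
  by move=> [A hA <-]; exists (\sum_(i \in A) a i); [exists A|rewrite ge0_mule_fsumr].
by move=> [_ [A hA <-] <-]; exists A => //; rewrite ge0_mule_fsumr.
Qed.

Lemma esum_swap (I J : set T) (F : T -> T -> \bar R) : (forall i j, 0 <= F i j) ->
  \esum_(i in I) \esum_(j in J) F i j = \esum_(j in J) \esum_(i in I) F i j.
Proof.
move=> F0; rewrite !esum_esum //.
rewrite (@reindex_esum R _ _ (J `*`` fun=> I) (I `*`` fun=> J) (fun k => (k.2, k.1))) //.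
split=> [[x y] [/= hx hy] //|[x y] [x' y'] _ _ /= [-> ->] //|[x y] [/= hx hy]].
by exists (y, x).
Qed.

Lemma esum_ge_term (S : set T) (f : T -> \bar R) c : S c -> f c <= \esum_(i in S) f i.
Proof.
move=> Sc; apply: esum_ge; exists [set c]; last by rewrite fsbig_set1.
by split=> [|x ->]; [exact: finite_set1|].
Qed.

End ExtendedSums.

Section MatrixSums.
Variables (R : realType) (d : nat) (L : set (Zd d)).

Lemma rsum_le (f g : Zd d -> R) (e : R) : (forall c, `|f c| <= g c) ->
  (\esum_(c in L) (g c)%:E <= e%:E)%E -> `|rsum L f| <= e.
Proof.
move=> fg ge.
have fine_esum_le (h : Zd d -> R) : (forall c, 0 <= h c <= g c) ->
    0 <= fine (\esum_(c in L) (h c)%:E)%E <= e.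
  move=> hg; have h0 : (0 <= \esum_(c in L) (h c)%:E)%E.
    by apply: esum_ge0 => c _; rewrite lee_fin; case/andP: (hg c).
  have : (\esum_(c in L) (h c)%:E <= e%:E)%E.
    by apply: le_trans ge; apply: le_esum => c _; rewrite lee_fin; case/andP: (hg c).
  by case: (\esum_(c in L) _)%E h0 => //= r; rewrite !lee_fin => -> ->.
have /andP[p0 pe] : 0 <= fine (\esum_(c in L) (Num.max (f c) 0)%:E)%E <= e.
  apply: fine_esum_le => c; rewrite le_max lexx orbT ge_max.
  by have := fg c; have := ler_norm (f c); have := normr_ge0 (f c); lra.
have /andP[n0 ne] : 0 <= fine (\esum_(c in L) (Num.max (- f c) 0)%:E)%E <= e.
  apply: fine_esum_le => c; rewrite le_max lexx orbT ge_max.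
  by have := fg c; have := ler_norm (- f c); rewrite normrN; have := normr_ge0 (f c); lra.
by rewrite /rsum ler_norml; lra.
Qed.

Lemma opnorm_msum_le (F : Zd d -> 'M[R[i]]_2) :
  ((opnorm (Defs.msum L F))%:E <= 16%:E * \esum_(c in L) (mxabs1 (F c))%:E)%E.
Proof.
have : (0 <= \esum_(c in L) (mxabs1 (F c))%:E)%E.
  by apply: esum_ge0 => c _; rewrite lee_fin mxabs1_ge0.
case E : (\esum_(c in L) _)%E => [e| |] // _; last first.
  by rewrite mulry gtr0_sg // mul1e leey.
have entry_le i j : cabs1 (Defs.msum L F i j) <= 2 * e.
  have part_le (p : R[i] -> R) : (forall z, `|p z| <= cabs1 z) ->
      `|rsum L (fun c => p (F c i j))| <= e.
    move=> hp; apply: (rsum_le (g := fun c => mxabs1 (F c))); last by rewrite E.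
    by move=> c; apply: le_trans (hp _) (cabs1_le_mxabs1 _ i j).
  rewrite /Defs.msum mxE /cabs1 /=.
  have := part_le (@complex.Re R) (fun z => ler_wpDr (normr_ge0 _) (lexx _)).
  have := part_le (@complex.Im R) (fun z => ler_wpDl (normr_ge0 _) (lexx _)); lra.
rewrite -EFinM lee_fin; apply: le_trans (opnorm_le_mxabs1 _) _.
rewrite /mxabs1 !sum_ord2.
have := entry_le 0 0; have := entry_le 0 1; have := entry_le 1 0; have := entry_le 1 1; lra.
Qed.

End MatrixSums.

Lemma cauchy_schwarz (R : realFieldType) (I : finType) (u v : I -> R) :
  (\sum_i u i * v i) ^+ 2 <= (\sum_i u i ^+ 2) * (\sum_i v i ^+ 2).
Proof.
have sumM (f g : I -> R) : \sum_i \sum_j f i * g j = (\sum_i f i) * (\sum_j g j).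
  by rewrite mulr_suml; apply: eq_bigr => i _; rewrite mulr_sumr.
have lagrange : \sum_i \sum_j (u i * v j - u j * v i) ^+ 2 =
   \sum_i \sum_j u i ^+ 2 * v j ^+ 2 + \sum_i \sum_j v i ^+ 2 * u j ^+ 2
   - 2 * \sum_i \sum_j (u i * v i) * (u j * v j).
  rewrite mulr_sumr -!big_split -sumrB /=; apply: eq_bigr => i _.
  by rewrite mulr_sumr -!big_split -sumrB /=; apply: eq_bigr => j _; ring.
have : 0 <= \sum_i \sum_j (u i * v j - u j * v i) ^+ 2.
  by apply: sumr_ge0 => i _; apply: sumr_ge0 => j _; apply: sqr_ge0.
by rewrite lagrange !sumM expr2; lra.
Qed.

Lemma minkowski (R : rcfType) (I : finType) (u v : I -> R) :
  Num.sqrt (\sum_i (u i + v i) ^+ 2) <=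
  Num.sqrt (\sum_i u i ^+ 2) + Num.sqrt (\sum_i v i ^+ 2).
Proof.
set A := \sum_i u i ^+ 2; set B := \sum_i v i ^+ 2.
have A0 : 0 <= A by apply: sumr_ge0 => i _; apply: sqr_ge0.
have B0 : 0 <= B by apply: sumr_ge0 => i _; apply: sqr_ge0.
have -> : \sum_i (u i + v i) ^+ 2 = A + B + 2 * \sum_i u i * v i.
  by rewrite /A /B mulr_sumr -!big_split /=; apply: eq_bigr => i _; ring.
have cs : \sum_i u i * v i <= Num.sqrt A * Num.sqrt B.
  rewrite -sqrtrM // (le_trans (ler_norm _)) // -sqrtr_sqr.
  exact/ler_wsqrtr/cauchy_schwarz.
rewrite -[leRHS]ger0_norm ?addr_ge0 // -sqrtr_sqr; apply: ler_wsqrtr.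
have := sqr_sqrtr A0; have := sqr_sqrtr B0; rewrite !expr2; lra.
Qed.

Section LatticeGeometry.
Variables (R : realType) (d : nat).
Implicit Types a b c : Zd d.

Local Notation zabs := (Defs.zabs R).
Local Notation zang := (Defs.zang R).
Local Notation zbr := (Defs.zbr R).

Lemma zabs_ge0 a : 0 <= zabs a.
Proof. exact: sqrtr_ge0. Qed.

Lemma zabsD a b : zabs (a + b) <= zabs a + zabs b.
Proof.
apply: le_trans (minkowski _ _); rewrite le_eqVlt; apply/orP; left; apply/eqP.
by congr Num.sqrt; apply: eq_bigr => i _; rewrite mxE intrD.
Qed.

Lemma zabsN a : zabs (- a) = zabs a.
Proof. by congr Num.sqrt; apply: eq_bigr => i _; rewrite mxE intrN sqrrN. Qed.

Lemma zabsB a b : zabs (a - b) <= zabs a + zabs b.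
Proof. by rewrite -(zabsN b); apply: zabsD. Qed.

Lemma zbr_ge0 a b : 0 <= zbr a b.
Proof. by rewrite le_min !zabs_ge0. Qed.

Lemma zbrC a b : zbr a b = zbr b a.
Proof. by rewrite /Defs.zbr [b + a]addrC -[b - a]opprB zabsN. Qed.

Lemma zbrP a b : zbr a b = zabs (a - b) \/ zbr a b = zabs (a + b).
Proof. by rewrite /Defs.zbr minEle; case: ifP; [left|right]. Qed.

Lemma zbr_triangle a b c : zbr a b <= zbr a c + zbr c b.
Proof.
have le_sub a' b' : zbr a' b' <= zabs (a' - b') by rewrite ge_min lexx.
have le_add a' b' : zbr a' b' <= zabs (a' + b') by rewrite ge_min lexx orbT.
have [->|->] := zbrP a c; have [->|->] := zbrP c b.
- apply: le_trans (le_sub _ _) _.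
  by rewrite (_ : a - b = (a - c) + (c - b)) ?zabsD // addrA subrK.
- apply: le_trans (le_add _ _) _.
  by rewrite (_ : a + b = (a - c) + (c + b)) ?zabsD // addrA subrK.
- apply: le_trans (le_add _ _) _.
  by rewrite (_ : a + b = (a + c) - (c - b)) ?zabsB // opprB addrA addrAC addrK.
- apply: le_trans (le_sub _ _) _.
  by rewrite (_ : a - b = (a + c) - (c + b)) ?zabsB // opprD addrA addrK.
Qed.

Lemma zang_ge1 a : 1 <= zang a.
Proof. by rewrite le_max lexx orbT. Qed.

Lemma zang_le a c : zang a <= 2 * zang c * Num.max (zbr a c) 1.
Proof.
have abs_le : zabs a <= zabs c + zbr a c.
  have [->|->] := zbrP a c.
    by rewrite {1}(_ : a = c + (a - c)) ?zabsD // addrC subrK.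
  by have := zabsB (a + c) c; rewrite addrK addrC.
have c_le : zabs c <= zang c by rewrite le_max lexx.
have c1 := zang_ge1 c; have zbr0 := zbr_ge0 a c.
have M1 : zbr a c <= Num.max (zbr a c) 1 by rewrite le_max lexx.
have M2 : 1 <= Num.max (zbr a c) 1 by rewrite le_max lexx orbT.
by rewrite [zang a]/Defs.zang ge_max; apply/andP; split; nra.
Qed.

Lemma min_zang_le a b c :
  Num.min (zang a) (zang b) <=
  2 * Num.min (zang c) (zang b) * Num.min (Num.max (zbr a c) 1) (Num.max (zbr c b) 1).
Proof.
have ha := zang_le a c; have hb := zang_le b c; rewrite zbrC in hb.
have := zang_ge1 a; have := zang_ge1 b; have := zang_ge1 c.
have X1 : 1 <= Num.max (zbr a c) 1 by rewrite le_max lexx orbT.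
have Y1 : 1 <= Num.max (zbr c b) 1 by rewrite le_max lexx orbT.
move: ha hb X1 Y1; set X := Num.max (zbr a c) 1; set Y := Num.max (zbr c b) 1.
move=> ha hb X1 Y1 c1 b1 a1.
rewrite [Num.min (zang c) _]minEle [Num.min X Y]minEle ge_min.
have [cb|bc] := leP (zang c) (zang b); have [XY|YX] := leP X Y;
  apply/orP; [left|right|right|right]; nra.
Qed.

Lemma max_zbr_le a b c :
  Num.max (zbr a b) 1 <= 2 * Num.max (Num.max (zbr a c) 1) (Num.max (zbr c b) 1).
Proof.
have tri := zbr_triangle a b c.
have Xc : zbr a c <= Num.max (zbr a c) 1 by rewrite le_max lexx.
have Yc : zbr c b <= Num.max (zbr c b) 1 by rewrite le_max lexx.
have X1 : 1 <= Num.max (zbr a c) 1 by rewrite le_max lexx orbT.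
have Y1 : 1 <= Num.max (zbr c b) 1 by rewrite le_max lexx orbT.
move: Xc Yc X1 Y1; set X := Num.max (zbr a c) 1; set Y := Num.max (zbr c b) 1.
move=> Xc Yc X1 Y1; rewrite ge_max [Num.max X Y]maxEle.
by have [XY|YX] := leP X Y; apply/andP; split; nra.
Qed.

Lemma weight_le (g kap : R) a b c : 0 <= kap -> kap <= g ->
  Num.max (zbr a b) 1 `^ g * Num.min (zang a) (zang b) `^ kap <=
  2 `^ (g + kap) * (Num.max (zbr a c) 1 `^ g * Num.max (zbr c b) 1 `^ g *
                    Num.min (zang c) (zang b) `^ kap).
Proof.
move=> k0 kg; have g0 : 0 <= g := le_trans k0 kg.
have hT := max_zbr_le a b c; have hm := min_zang_le a b c.
have X1 : 1 <= Num.max (zbr a c) 1 by rewrite le_max lexx orbT.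
have Y1 : 1 <= Num.max (zbr c b) 1 by rewrite le_max lexx orbT.
have mu0 : 0 <= Num.min (zang c) (zang b).
  by rewrite le_min !(le_trans ler01 (zang_ge1 _)).
have T0 : 0 <= Num.max (zbr a b) 1 by rewrite le_max ler01 orbT.
have m0 : 0 <= Num.min (zang a) (zang b).
  by rewrite le_min !(le_trans ler01 (zang_ge1 _)).
move: hT hm X1 Y1 mu0 T0 m0.
set X := Num.max (zbr a c) 1; set Y := Num.max (zbr c b) 1.
set T := Num.max (zbr a b) 1; set m := Num.min (zang a) _; set mu := Num.min _ _.
move=> hT hm X1 Y1 mu0 T0 m0.
have X0 : 0 <= X := le_trans ler01 X1; have Y0 : 0 <= Y := le_trans ler01 Y1.
have N0 : 0 <= Num.max X Y by rewrite le_max X0.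
have n1 : 1 <= Num.min X Y by rewrite le_min X1.
have n0 : 0 <= Num.min X Y := le_trans ler01 n1.
have Nn : Num.max X Y * Num.min X Y = X * Y.
  by rewrite maxEle minEle; case: ifP => _; rewrite // mulrC.
have powT : T `^ g <= 2 `^ g * Num.max X Y `^ g.
  by rewrite -powRM // ge0_ler_powR // nnegrE mulr_ge0.
have powm : m `^ kap <= 2 `^ kap * mu `^ kap * Num.min X Y `^ g.
  apply: le_trans (_ : _ <= 2 `^ kap * mu `^ kap * Num.min X Y `^ kap) _.
    by rewrite -!powRM ?mulr_ge0 // ge0_ler_powR // nnegrE !mulr_ge0.
  by rewrite ler_wpM2l ?mulr_ge0 ?powR_ge0 // ler_powR.
apply: le_trans (ler_pM (powR_ge0 _ _) (powR_ge0 _ _) powT powm) _.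
rewrite powRD ?pnatr_eq0 ?implybT // -(powRM _ X0 Y0) -Nn powRM //.
(* Opaque atoms, lest [ring] compare the powers up to conversion (very slow). *)
move: (2 `^ g) (2 `^ kap) (Num.max X Y `^ g) (Num.min X Y `^ g) (mu `^ kap) => p q u v w.
by rewrite le_eqVlt; apply/orP; left; apply/eqP; ring.
Qed.

Lemma ewtC (C g1 g2 kap : R) a b : ewt C g1 g2 kap a b = ewt C g1 g2 kap b a.
Proof. by rewrite /ewt zbrC minC. Qed.

Lemma ewt_submul (C g1 g2 kap K : R) a b c :
  0 <= g1 -> 0 <= kap -> kap <= g2 -> 0 <= K -> K * 2 `^ (g2 + kap) <= C ->
  K * ewt C g1 g2 kap a b <= ewt C g1 g2 0 a c * ewt C g1 g2 kap c b.
Proof.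
move=> g10 k0 kg K0 hC.
have C0 : 0 <= C := le_trans (mulr_ge0 K0 (powR_ge0 _ _)) hC.
have hexp : expR (g1 * zbr a b) <= expR (g1 * zbr a c) * expR (g1 * zbr c b).
  by rewrite -expRD ler_expR -mulrDr ler_wpM2l // zbr_triangle.
have hw := weight_le a b c k0 kg.
rewrite /ewt powRr0; move: hexp hw.
set E := expR (_ * zbr a b); set E1 := expR _; set E2 := expR _.
set P := _ `^ g2; set Q := _ `^ kap; set P1 := _ `^ g2; set P2 := _ `^ g2.
set M := _ `^ kap; set s := 2 `^ _ => hexp hw.
have s0 : 0 <= s by apply: powR_ge0.
have W0 : 0 <= E1 * E2 * (P1 * P2 * M) by rewrite !mulr_ge0 ?expR_ge0 ?powR_ge0.
apply: le_trans (_ : _ <= C * (K * (E1 * E2 * (s * (P1 * P2 * M))))) _.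
  rewrite (_ : _ * _ = C * (K * (E * (P * Q)))); last by ring.
  rewrite !ler_wpM2l // ler_pM ?expR_ge0 ?mulr_ge0 ?powR_ge0 //.
rewrite (_ : _ * (_ * _) = C * (K * s * (E1 * E2 * (P1 * P2 * M)))); last by ring.
rewrite [leRHS](_ : _ = C * (C * (E1 * E2 * (P1 * P2 * M)))); last by ring.
by rewrite ler_wpM2l // ler_wpM2r.
Qed.

Lemma ewt_submulC (C g1 g2 kap K : R) a b c :
  0 <= g1 -> 0 <= kap -> kap <= g2 -> 0 <= K -> K * 2 `^ (g2 + kap) <= C ->
  K * ewt C g1 g2 kap a b <= ewt C g1 g2 kap a c * ewt C g1 g2 0 c b.
Proof.
move=> g10 k0 kg K0 hC; have := ewt_submul b a c g10 k0 kg K0 hC.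
by rewrite (ewtC _ _ _ _ b a) (ewtC _ _ _ _ b c) (ewtC _ _ _ _ c a) [X in _ <= X]mulrC.
Qed.

Lemma ewt_ge1 (C g1 g2 kap : R) a b : 1 <= C -> 0 <= g1 -> 0 <= g2 -> 0 <= kap ->
  1 <= ewt C g1 g2 kap a b.
Proof.
move=> C1 g10 g20 k0.
have pow_ge1 (x r : R) : 0 <= r -> 1 <= x -> 1 <= x `^ r.
  by move=> r0 x1; rewrite -(powRr0 x) ler_powR.
rewrite /ewt !mulr_ege1 //.
- by rewrite -expR0 ler_expR mulr_ge0 // zbr_ge0.
- by rewrite pow_ge1 // le_max lexx orbT.
- by rewrite pow_ge1 // le_min !zang_ge1.
Qed.

End LatticeGeometry.

Section SchurTest.
Variables (R : realType) (T : choiceType) (L : set T).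
Implicit Types p q r : T -> T -> R.
Local Open Scope ereal_scope.

Definition schur_norm p : \bar R :=
  Order.max (Order.max 0 (ereal_sup [set \esum_(b in L) (p a b)%:E | a in L]))
            (ereal_sup [set \esum_(a in L) (p a b)%:E | b in L]).

Lemma schur_norm_ge0 p : 0 <= schur_norm p.
Proof. by rewrite !le_max lexx. Qed.

Lemma schur_normC p : schur_norm (fun a b => p b a) = schur_norm p.
Proof. by rewrite /schur_norm -maxA [X in Order.max _ X]maxC maxA. Qed.

Lemma row_le_schur_norm p a : L a -> \esum_(b in L) (p a b)%:E <= schur_norm p.
Proof.
move=> La; rewrite !le_max; apply/orP; left; apply/orP; right.
by apply: ereal_sup_ubound; exists a.
Qed.

Lemma schur_norm_le p (B : \bar R) : 0 <= B ->
  (forall a, L a -> \esum_(b in L) (p a b)%:E <= B) ->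
  (forall b, L b -> \esum_(a in L) (p a b)%:E <= B) -> schur_norm p <= B.
Proof.
move=> B0 row col; rewrite !ge_max B0 /=; apply/andP; split.
  by apply: ge_ereal_sup => _ [a La <-]; apply: row.
by apply: ge_ereal_sup => _ [b Lb <-]; apply: col.
Qed.

Section Composition.
Variables p q : T -> T -> R.
Hypotheses (p0 : forall a b, (0 <= p a b)%R) (q0 : forall a b, (0 <= q a b)%R).
Hypothesis q_fin : schur_norm q < +oo.

Lemma row_comp_le_schur_norm a : L a ->
  \esum_(b in L) \esum_(c in L) (p a c * q c b)%:E <= schur_norm p * schur_norm q.
Proof.
move=> La; have [y y0 qE] : exists2 y, (0 <= y)%R & schur_norm q = y%:E.
  exists (fine (schur_norm q)); last by rewrite fineK // ge0_fin_numE ?schur_norm_ge0.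
  by rewrite fine_ge0 // schur_norm_ge0.
rewrite esum_swap; last by move=> c b; rewrite lee_fin mulr_ge0.
under eq_esum do under eq_esum do rewrite EFinM.
have q0E c b : 0 <= (q c b)%:E by rewrite lee_fin.
under eq_esum => c _ do rewrite (esumZl _ (p0 a c) (q0E c)).
apply: (@le_trans _ _ (\esum_(c in L) (p a c)%:E * y%:E)).
  apply: le_esum => c Lc; rewrite lee_wpmul2l ?lee_fin // -qE.
  exact: row_le_schur_norm.
under eq_esum do rewrite muleC; rewrite esumZl // => [|c]; last by rewrite lee_fin.
by rewrite muleC qE lee_wpmul2r ?lee_fin // row_le_schur_norm.
Qed.

Lemma entry_comp_le_schur_norm a b : L a -> L b ->
  \esum_(c in L) (p a c * q c b)%:E <= schur_norm p * schur_norm q.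
Proof.
move=> La Lb; apply: le_trans (row_comp_le_schur_norm La).
exact: (esum_ge_term (fun b => \esum_(c in L) (p a c * q c b)%:E) Lb).
Qed.

End Composition.

Lemma schur_norm_comp_le p q r :
  (forall a b, (0 <= p a b)%R) -> (forall a b, (0 <= q a b)%R) ->
  schur_norm p < +oo -> schur_norm q < +oo ->
  (forall a b, L a -> L b -> (r a b)%:E <= \esum_(c in L) (p a c * q c b)%:E) ->
  schur_norm r <= schur_norm p * schur_norm q.
Proof.
move=> p0 q0 p_fin q_fin r_le.
apply: schur_norm_le => [|a La|b Lb]; first by rewrite mule_ge0 ?schur_norm_ge0.
  apply: le_trans (row_comp_le_schur_norm p0 q0 q_fin La).
  by apply: le_esum => b Lb; apply: r_le.
apply: (@le_trans _ _ (\esum_(a in L) \esum_(c in L) (q c b * p a c)%:E)).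
  apply: le_esum => a La; apply: le_trans (r_le _ _ La Lb) _.
  by under [X in _ <= X]eq_esum do rewrite mulrC.
rewrite muleC -(schur_normC p) -(schur_normC q).
by apply: row_comp_le_schur_norm => //; rewrite schur_normC.
Qed.

End SchurTest.

Section WeightedProducts.
Variables (R : realType) (d : nat) (L : set (Zd d)).
Implicit Types (W : Zd d -> Zd d -> R) (X Y : blockmx R d).

Definition weighted_opnorm W X a b := opnorm (X a b) * W a b.

Lemma mnormE C g1 g2 kap X :
  mnorm C g1 g2 kap L X = schur_norm L (weighted_opnorm (ewt C g1 g2 kap) X).
Proof. by []. Qed.

Lemma mprod_entry_le W WX WY X Y a b :
  0 <= W a b -> (forall c, 1024 * W a b <= WX a c * WY c b) ->
  ((weighted_opnorm W (mprod L X Y) a b)%:E <=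
   \esum_(c in L) (weighted_opnorm WX X a c * weighted_opnorm WY Y c b)%:E)%E.
Proof.
move=> W0 hW; rewrite /weighted_opnorm /mprod EFinM muleC.
apply: le_trans (lee_wpmul2l _ (opnorm_msum_le _ _)) _; first by rewrite lee_fin.
rewrite muleA -EFinM -esumZl ?mulr_ge0 // => [|c]; last by rewrite lee_fin mxabs1_ge0.
apply: le_esum => c _; rewrite -EFinM lee_fin.
set oX := opnorm (X a c); set oY := opnorm (Y c b).
have oXY0 : 0 <= oX * oY by rewrite mulr_ge0 ?opnorm_ge0.
apply: le_trans (_ : _ <= 1024 * W a b * (oX * oY)) _.
  by have := mxabs1_mulmx_le (X a c) (Y c b); rewrite -/oX -/oY; nra.
rewrite [leRHS](_ : _ = WX a c * WY c b * (oX * oY)); last by ring.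
exact: ler_wpM2r.
Qed.

Section Bounds.
Variables (W WX WY : Zd d -> Zd d -> R) (X Y : blockmx R d).
Hypotheses (WX1 : forall a b, 1 <= WX a b) (WY1 : forall a b, 1 <= WY a b).
Hypotheses (X_fin : (schur_norm L (weighted_opnorm WX X) < +oo)%E)
           (Y_fin : (schur_norm L (weighted_opnorm WY Y) < +oo)%E).

Let wX0 a b : 0 <= weighted_opnorm WX X a b.
Proof. by rewrite mulr_ge0 ?opnorm_ge0 // (le_trans ler01). Qed.

Let wY0 a b : 0 <= weighted_opnorm WY Y a b.
Proof. by rewrite mulr_ge0 ?opnorm_ge0 // (le_trans ler01). Qed.

Let schur_norm_mul_lty :
  (schur_norm L (weighted_opnorm WX X) * schur_norm L (weighted_opnorm WY Y) < +oo)%E.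
Proof. by rewrite lte_mul_pinfty ?schur_norm_ge0 ?ge0_fin_numE ?schur_norm_ge0. Qed.

Lemma mprod_abs_summable a b : L a -> L b -> abs_summable L (fun c => X a c *m Y c b).
Proof.
move=> La Lb; rewrite /abs_summable.
apply: (@le_lt_trans _ _ (128%:E * \esum_(c in L)
          (weighted_opnorm WX X a c * weighted_opnorm WY Y c b)%:E)%E).
  rewrite -esumZl // => [|c]; last by rewrite lee_fin mulr_ge0.
  apply: le_esum => c _; rewrite -EFinM lee_fin.
  apply: le_trans (opnorm_mulmx_le _ _) _; rewrite ler_wpM2l //.
  by rewrite ler_pM ?opnorm_ge0 // ler_peMr ?opnorm_ge0.
apply: lte_mul_pinfty => //.
exact: le_lt_trans (entry_comp_le_schur_norm wX0 wY0 Y_fin La Lb) schur_norm_mul_lty.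
Qed.

Lemma mprod_schur_norm_le : (forall a b, 0 <= W a b) ->
  (forall a b c, 1024 * W a b <= WX a c * WY c b) ->
  (schur_norm L (weighted_opnorm W (mprod L X Y)) <=
   schur_norm L (weighted_opnorm WX X) * schur_norm L (weighted_opnorm WY Y))%E.
Proof.
move=> W0 hW; apply: schur_norm_comp_le => // a b _ _.
exact: mprod_entry_le.
Qed.

Lemma mprod_schur_norm_lty : (forall a b, 0 <= W a b) ->
  (forall a b c, 1024 * W a b <= WX a c * WY c b) ->
  (schur_norm L (weighted_opnorm W (mprod L X Y)) < +oo)%E.
Proof.
by move=> W0 hW; apply: le_lt_trans (mprod_schur_norm_le W0 hW) schur_norm_mul_lty.
Qed.

End Bounds.

End WeightedProducts.

Unset Implicit Arguments.

Theorem proposition2p2 (R : realType) (g2 kap : R) :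
  0 <= g2 -> 0 <= kap -> kap <= g2 ->
  exists C0 : R, 1 <= C0 /\
  forall (C : R), C0 <= C ->
  forall (d : nat) (L : set (Zd d)) (g1 : R), (0 < d)%N -> 0 <= g1 ->
  forall (A B : blockmx R d),
    (mnorm C g1 g2 0 L A < +oo)%E ->
    (mnorm C g1 g2 kap L B < +oo)%E ->
    (forall a b, L a -> L b ->
       abs_summable L (fun c => A a c *m B c b) /\
       abs_summable L (fun c => B a c *m A c b)) /\
    (mnorm C g1 g2 kap L (mprod L A B) < +oo)%E /\
    (mnorm C g1 g2 kap L (mprod L B A) < +oo)%E /\
    (mnorm C g1 g2 kap L (mprod L A B)
       <= mnorm C g1 g2 0 L A * mnorm C g1 g2 kap L B)%E /\
    (mnorm C g1 g2 kap L (mprod L B A)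
       <= mnorm C g1 g2 0 L A * mnorm C g1 g2 kap L B)%E.
Proof.
move=> g20 k0 kg.
have C0_ge1 : 1 <= 1024 * 2 `^ (g2 + kap) :> R.
  rewrite mulr_ege1 //; first by rewrite ler1n.
  by rewrite -[leLHS](powRr0 2) ler_powR ?ler1n ?addr_ge0.
exists (1024 * 2 `^ (g2 + kap)); split=> [//|C hC d L g1 _ g10 A B].
rewrite (mnormE L _ _ _ 0 A) (mnormE L _ _ _ kap B).
rewrite (mnormE L _ _ _ kap (mprod L A B)) (mnormE L _ _ _ kap (mprod L B A)) => hA hB.
have C1 := le_trans C0_ge1 hC.
have W01 (a b : Zd d) : 1 <= ewt C g1 g2 0 a b := ewt_ge1 a b C1 g10 g20 (lexx 0).
have Wk1 (a b : Zd d) : 1 <= ewt C g1 g2 kap a b := ewt_ge1 a b C1 g10 g20 k0.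
have Wk0 (a b : Zd d) : 0 <= ewt C g1 g2 kap a b := le_trans ler01 (Wk1 a b).
have hAB (a b c : Zd d) :
    1024 * ewt C g1 g2 kap a b <= ewt C g1 g2 0 a c * ewt C g1 g2 kap c b.
  exact: ewt_submul g10 k0 kg (ler0n _ 1024) hC.
have hBA (a b c : Zd d) :
    1024 * ewt C g1 g2 kap a b <= ewt C g1 g2 kap a c * ewt C g1 g2 0 c b.
  exact: ewt_submulC g10 k0 kg (ler0n _ 1024) hC.
split=> [a b La Lb|].
  split; first exact: (mprod_abs_summable (WX := ewt C g1 g2 0) W01 Wk1 hA hB La Lb).
  exact: (mprod_abs_summable (WX := ewt C g1 g2 kap) Wk1 W01 hB hA La Lb).
split; first exact: mprod_schur_norm_lty W01 Wk1 hA hB Wk0 hAB.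
split; first exact: mprod_schur_norm_lty Wk1 W01 hB hA Wk0 hBA.
split; first exact: mprod_schur_norm_le W01 Wk1 hA hB Wk0 hAB.
by rewrite muleC; apply: mprod_schur_norm_le Wk1 W01 hB hA Wk0 hBA.
Qed.
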